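(* Let $\psi$ be an $n$-dimensional unique sink orientation and let $C$ be a directed cycle in $\psi$ whose edges span every coordinate $1,\dots,n$. Then every vertex $v$ of $C$ has $r_\psi(v) = [n]$.
   Context: Let $Q^n = 2^{[n]}$ be the vertex set of the $n$-cube, with $u,v$ adjacent iff $|u\oplus v|=1$; the edge $\{v, v\oplus\{j\}\}$ is said to be in coordinate $j$. A unique sink orientation (USO) is an orientation of the cube's edges such that every nonempty face $F_{J,v}=\{u : v\oplus u\subseteq J\}$ has a unique sink. The outmap $s_\psi(v)$ is the set of coordinates $j$ such that the edge $\{v,v\oplus\{j\}\}$ is directed away from $v$. The reachmap is $r_\psi(v)=s_\psi(v)\cup\{j : \exists u \text{ reachable from } v \text{ by a directed path with } j\in s_\psi(u)\}$. A cycle spans coordinate $j$ if it contains an edge in coordinate $j$. *)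

From mathcomp Require Import all_boot.
Set Implicit Arguments. Unset Strict Implicit. Unset Printing Implicit Defensive.

(* Vertices of the n-cube Q^n are subsets of [n] = 'I_n. *)
Definition vtx (n : nat) := {set 'I_n}.

Definition symdiff (n : nat) (u v : {set 'I_n}) : {set 'I_n} :=
  (u :\: v) :|: (v :\: u).

Definition flip (n : nat) (v : {set 'I_n}) (j : 'I_n) : {set 'I_n} :=
  symdiff v [set j].

(* An orientation of the cube's edges: [out v j] says the edge
   {v, v (+) {j}} is directed away from v.  Consistency: each edge gets
   exactly one direction. *)
Definition orientation (n : nat) (out : {set 'I_n} -> 'I_n -> bool) : Prop :=
  forall v j, out (flip v j) j = ~~ out v j.

Definition face (n : nat) (J v : {set 'I_n}) : {set {set 'I_n}} :=
  [set u | symdiff v u \subset J].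

Definition is_face_sink (n : nat) (out : {set 'I_n} -> 'I_n -> bool)
    (J v u : {set 'I_n}) : bool :=
  (u \in face J v) && [forall j in J, ~~ out u j].

Definition USO (n : nat) (out : {set 'I_n} -> 'I_n -> bool) : Prop :=
  orientation out /\
  forall J v : {set 'I_n}, #|[set u | is_face_sink out J v u]| = 1.

Definition outmap (n : nat) (out : {set 'I_n} -> 'I_n -> bool)
    (v : {set 'I_n}) : {set 'I_n} := [set j | out v j].

Definition darc (n : nat) (out : {set 'I_n} -> 'I_n -> bool) : rel {set 'I_n} :=
  fun u w => [exists j, (w == flip u j) && out u j].

Definition reachmap (n : nat) (out : {set 'I_n} -> 'I_n -> bool)
    (v : {set 'I_n}) : {set 'I_n} :=
  outmap out v :|: [set j | [exists u, connect (darc out) v u && (j \in outmap out u)]].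

(* A directed cycle, given as a duplicate-free nonempty sequence of
   vertices c = [:: c0; ...; ck] with arcs c0->c1->...->ck->c0. *)
Definition directed_cycle (n : nat) (out : {set 'I_n} -> 'I_n -> bool)
    (c : seq {set 'I_n}) : Prop :=
  [/\ c != [::], uniq c & cycle (darc out) c].

Definition cycle_spans (n : nat) (c : seq {set 'I_n}) (j : 'I_n) : bool :=
  has (fun x => next c x == flip x j) c.

From mathcomp Require Import all_boot.

(* Every vertex of a directed cycle reaches every other one, in particular the
   tail of an arc of the cycle in coordinate j, whose outmap contains j. *)

Lemma flip_inj (n : nat) (x : {set 'I_n}) : injective (flip x).
Proof.
move=> j j' eq_flip.
have : (j \in flip x j) = (j \in flip x j') by rewrite eq_flip.
rewrite /flip /symdiff !inE eqxx.
by case: (j \in x); case: eqP.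
Qed.

Lemma darc_flip (n : nat) (out : {set 'I_n} -> 'I_n -> bool) x j :
  darc out x (flip x j) = out x j.
Proof.
apply/existsP/idP => [[j' /andP [/eqP /flip_inj <-]] //|out_xj].
by exists j; rewrite eqxx.
Qed.

Lemma reachmap_connect (n : nat) (out : {set 'I_n} -> 'I_n -> bool) v u j :
  connect (darc out) v u -> out u j -> j \in reachmap out v.
Proof.
move=> vu out_uj; rewrite inE; apply/orP; right.
by rewrite inE; apply/existsP; exists u; rewrite vu inE.
Qed.

Theorem lemma11 (n : nat) (out : {set 'I_n} -> 'I_n -> bool)
    (c : seq {set 'I_n}) :
  USO out ->
  directed_cycle out c ->
  (forall j : 'I_n, cycle_spans c j) ->
  forall v, v \in c -> reachmap out v = [set: 'I_n].
Proof.
move=> _ [_ _ cyc_c] span_c v vc; apply/setP => j; rewrite in_setT.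
have [x xc /eqP next_x] := hasP (span_c j).
have out_xj : out x j by rewrite -darc_flip -next_x (next_cycle cyc_c xc).
exact: reachmap_connect (connect_cycle cyc_c vc xc) out_xj.
Qed.
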